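(* Let $\varphi\in[0,\pi]$. Consider all post-selected linear optical implementations, using two dual-rail qubits on four signal modes, any finite number of auxiliary modes prepared in the vacuum, and photon-number-resolving detectors, of the two-qubit gate whose matrix in the computational basis $|00\rangle,|01\rangle,|10\rangle,|11\rangle$ is $U_\varphi=\mathrm{diag}(1,1,1,\mathrm{e}^{i\varphi})$. Here ''implementation'' means: the operator obtained from the network by restricting the input to the computational subspace, projecting the output of the signal modes onto the computational (dual-rail) subspace and projecting the auxiliary modes onto the vacuum equals $\sqrt{p_s}\,U_\varphi$ up to an overall phase, for some constant $p_s>0$ (the success probability, which is then the same for every input state). Then the maximal success probability over all such implementations is $$p_s(\varphi)=\left(1+2\left|\sin\frac{\varphi}{2}\right|+2^{3/2}\sin\frac{\pi-\varphi}{4}\sqrt{\left|\sin\frac{\varphi}{2}\right|}\right)^{-2}.$$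
   Context: Linear optics setting: a passive linear optical network on $m$ bosonic modes with creation operators $a_1^\dagger,\dots,a_m^\dagger$ is described by a unitary $m\times m$ matrix $V$, acting as $a_i^\dagger\mapsto\sum_{j} V_{j,i}a_j^\dagger$. This induces a unitary on Fock space that maps the vacuum to itself and conserves total photon number. Dual-rail encoding: qubit $k\in\{1,2\}$ is carried by two signal modes $\mathfrak{0}_k,\mathfrak{1}_k$, and the logical state $|b\rangle_k$ ($b\in\{0,1\}$) means exactly one photon in mode $\mathfrak{b}_k$ and none in the other. The computational subspace of the four signal modes is spanned by the four states with exactly one photon per qubit pair of modes. Auxiliary modes start in the vacuum; no auxiliary photons are used. After the network, all modes are measured with photon-number-resolving detectors, and the run is accepted (post-selected) only if every auxiliary mode is found in the vacuum and the signal modes are in the computational subspace. *)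

From HB Require Import structures.
From mathcomp Require Import all_boot all_order all_algebra.
From mathcomp Require Import complex.
From mathcomp Require Import reals trigo.

Set Implicit Arguments.
Unset Strict Implicit.
Unset Printing Implicit Defensive.

Import Order.TTheory GRing.Theory Num.Theory.
Local Open Scope ring_scope.
Local Open Scope complex_scope.

Section LinearOptics.
Variable R : realType.
Local Notation C := R[i].

(* A passive linear optical network on m modes is a unitary m x m matrix V;
   it acts on creation operators by  a_i^dag |-> \sum_j V j i a_j^dag. *)
Definition unitary_mx (m : nat) (V : 'M[C]_m) : Prop :=
  V *m (map_mx Num.conj V)^T = 1%:M.

(* The input state a_i^dag a_j^dag |vac>
   (i <> j) is mapped by the network to
     \sum_(k',l') V k' i * V l' j * a_k'^dag a_l'^dag |vac>.
   Its inner product with the normalized output Fock state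
   |1_k 1_l> = a_k^dag a_l^dag |vac>  (k <> l, all other modes in vacuum) is
     \sum_(k',l') V k' i * V l' j * <vac| a_l a_k a_k'^dag a_l'^dag |vac>
   where <vac| a_l a_k a_k'^dag a_l'^dag |vac> = [k'=k /\ l'=l] + [k'=l /\ l'=k]. *)
Definition amp2 (m : nat) (V : 'M[C]_m) (i j k l : 'I_m) : C :=
  \sum_(k' < m) \sum_(l' < m)
     V k' i * V l' j * ((((k', l') == (k, l)) || ((k', l') == (l, k))) : nat)%:R.

(* Mode layout on m = n + 4 modes (n auxiliary modes, all in the vacuum):
   modes 0,1 are the dual-rail modes 0_1,1_1 of qubit 1,
   modes 2,3 are the dual-rail modes 0_2,1_2 of qubit 2,
   modes 4..n+3 are auxiliary. *)
Definition mode1 (n : nat) (b : bool) : 'I_(n.+4) := inord (nat_of_bool b).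
Definition mode2 (n : nat) (b : bool) : 'I_(n.+4) := inord (2 + nat_of_bool b).

(* Post-selected operator on the computational subspace: matrix element
   <c1 c2| A |b1 b2>, i.e. amplitude to find the signal modes in logical
   state |c1 c2> and all auxiliary modes in the vacuum, given logical input
   |b1 b2> and auxiliary vacuum. *)
Definition postsel (n : nat) (V : 'M[C]_(n.+4)) (c1 c2 b1 b2 : bool) : C :=
  amp2 V (mode1 n b1) (mode2 n b2) (mode1 n c1) (mode2 n c2).

Definition Uphi (phi : R) (c1 c2 b1 b2 : bool) : C :=
  if (c1 == b1) && (c2 == b2) then
    (if b1 && b2 then (cos phi +i* sin phi) else 1)
  else 0.

Definition implements (phi : R) (n : nat) (V : 'M[C]_(n.+4)) (p : R) : Prop :=
  0 < p /\
  exists c : C, `|c| = 1 /\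
    forall c1 c2 b1 b2 : bool,
      postsel V c1 c2 b1 b2 = (Num.sqrt p)%:C * c * Uphi phi c1 c2 b1 b2.

Definition ps_opt (phi : R) : R :=
  (1 + 2 * `|sin (phi / 2)|
     + Num.sqrt 2 ^+ 3 * sin ((pi - phi) / 4) * Num.sqrt `|sin (phi / 2)|) ^-2.

End LinearOptics.

(* Post-selecting one photon per qubit turns the network V into the matrix of
   2x2 permanents of its signal block:  <c d|A|a b> = P_ca T_db + S_da Q_cb,
   where P, T act within a qubit and Q, S across the qubits.  Matching this
   with s U_w (s = sqrt p_s times a phase, w = e^{i phi}) forces P and T to be
   diagonal and leaves a single cross term Q_ab S_ba, so some 2x2 submatrix
   [[a, b], [c, d]] of V has ad = s u and bc = s (v - u) with |u| = |v| = 1 and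
   |v - u| = |w - 1| =: x.  A submatrix of a unitary is a contraction; by
   Cauchy-Schwarz on the remaining columns, its rows have norm <= 1 and
   |a|^2 + |b|^2 + |c|^2 + |d|^2 <= 1 + |ad - bc|^2.  These constraints give
   |s| (1 + x + sqrt (2x - x^2)) <= 1.  If r is the square root of w - 1 with
   nonnegative real part, then 1 + x + sqrt (2x - x^2) = |1 + r|^2, and a
   7-mode network in which only the two logical-1 rails and one auxiliary mode
   interfere attains |s| = |1 + r|^-2. *)

From HB Require Import structures.
From mathcomp Require Import all_boot all_order all_algebra.
From mathcomp Require Import complex.
From mathcomp Require Import reals trigo.
From mathcomp Require Import ring lra.

Import Order.TTheory GRing.Theory Num.Theory.
Local Open Scope ring_scope.

Set Implicit Arguments.
Unset Strict Implicit.
Unset Printing Implicit Defensive.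

Lemma amp2E (R : realType) m (V : 'M[R[i]]_m) (i j k l : 'I_m) : k != l ->
  amp2 V i j k l = V k i * V l j + V l i * V k j.
Proof.
move=> kl; rewrite /amp2 pair_big /= (bigD1 (k, l)) //= (bigD1 (l, k)) /=; last first.
  by rewrite xpair_eqE eq_sym (negbTE kl).
rewrite !eqxx orbT !mulr1 big1 ?addr0 // => -[k' l'] /andP[/negbTE -> /negbTE ->].
by rewrite mulr0.
Qed.

Lemma CauchySchwarz_sum (C : numClosedFieldType) (I : finType) (P : pred I)
    (f g : I -> C) :
  (\sum_(k | P k) f k * (g k)^*) * (\sum_(k | P k) f k * (g k)^*)^*
    <= (\sum_(k | P k) f k * (f k)^*) * (\sum_(k | P k) g k * (g k)^*).
Proof.
set fg := \sum_(k | P k) f k * (g k)^*.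
set ff := \sum_(k | P k) f k * (f k)^*; set gg := \sum_(k | P k) g k * (g k)^*.
have gg0 : 0 <= gg by apply: sumr_ge0 => k _; exact: mul_conjC_ge0.
have [gg_eq0|gg_neq0] := eqVneq gg 0.
  have g0 k : P k -> g k = 0.
    move=> Pk; apply/eqP; rewrite -mul_conjC_eq0; apply/eqP.
    by apply: (psumr_eq0P _ gg_eq0) => // k' _; exact: mul_conjC_ge0.
  have -> : fg = 0 by rewrite /fg big1 // => k Pk; rewrite g0 // rmorph0 mulr0.
  by rewrite mul0r gg_eq0 mulr0.
have gg_gt0 : 0 < gg by rewrite lt_def gg_neq0 gg0.
have expand : \sum_(k | P k) (gg * f k - fg * g k) * (gg * f k - fg * g k)^*
    = gg * (ff * gg - fg * fg^*).
  have gg_real : gg^* = gg by apply: geC0_conj.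
  have gf : \sum_(k | P k) g k * (f k)^* = fg^*.
    by rewrite rmorph_sum; apply: eq_bigr => k _; rewrite rmorphM /= conjCK mulrC.
  transitivity (\sum_(k | P k) (gg * gg * (f k * (f k)^*) - gg * fg^* * (f k * (g k)^*)
      - fg * gg * (g k * (f k)^*) + fg * fg^* * (g k * (g k)^*))).
    by apply: eq_bigr => k _; rewrite rmorphB !rmorphM /= gg_real; ring.
  rewrite !big_split /= !sumrN -!mulr_sumr gf -/ff -/gg -/fg; ring.
have : 0 <= gg * (ff * gg - fg * fg^*).
  by rewrite -expand; apply: sumr_ge0 => k _; exact: mul_conjC_ge0.
by rewrite pmulr_rge0 // subr_ge0.
Qed.

Lemma unitary_submx2_contraction (R : realType) m (V : 'M[R[i]]_m)
    (r1 r2 k1 k2 : 'I_m) :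
  unitary_mx V -> r1 != r2 -> k1 != k2 ->
  [/\ `|V r1 k1| ^+ 2 + `|V r1 k2| ^+ 2 <= 1,
      `|V r2 k1| ^+ 2 + `|V r2 k2| ^+ 2 <= 1 &
      `|V r1 k1| ^+ 2 + `|V r1 k2| ^+ 2 + `|V r2 k1| ^+ 2 + `|V r2 k2| ^+ 2
        <= 1 + `|V r1 k1 * V r2 k2 - V r1 k2 * V r2 k1| ^+ 2].
Proof.
move=> /matrixP unitV r12 k12.
pose P k := (k != k1) && (k != k2).
pose rest r r' := \sum_(k | P k) V r k * (V r' k)^*.
have rowsE r r' : V r k1 * (V r' k1)^* + V r k2 * (V r' k2)^* + rest r r'
    = ((r == r') : nat)%:R.
  have := unitV r r'; rewrite !mxE => <-.
  rewrite (bigD1 k1) //= (bigD1 k2) 1?eq_sym //= addrA.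
  by congr (_ + _ + _); [ | | apply: eq_bigr => k _]; rewrite !mxE.
have rest11 : rest r1 r1 = 1 - V r1 k1 * (V r1 k1)^* - V r1 k2 * (V r1 k2)^*.
  by move: (rowsE r1 r1); rewrite eqxx mulr1n => <-; ring.
have rest22 : rest r2 r2 = 1 - V r2 k1 * (V r2 k1)^* - V r2 k2 * (V r2 k2)^*.
  by move: (rowsE r2 r2); rewrite eqxx mulr1n => <-; ring.
have rest12 : rest r1 r2 = - (V r1 k1 * (V r2 k1)^* + V r1 k2 * (V r2 k2)^*).
  by apply/eqP; rewrite -addr_eq0 addrC rowsE (negbTE r12).
have rest_ge0 r : 0 <= rest r r by apply: sumr_ge0 => k _; exact: mul_conjC_ge0.
have := CauchySchwarz_sum P (V r1) (V r2); rewrite -/(rest r1 r2) -/(rest r1 r1) -/(rest r2 r2).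
rewrite !normCK -subr_ge0 rest11 rest22 rest12 => CS.
split; first by rewrite -subr_ge0 opprD addrA -rest11 rest_ge0.
  by rewrite -subr_ge0 opprD addrA -rest22 rest_ge0.
rewrite -subr_ge0; move: CS; congr (0 <= _).
rewrite !rmorphN !rmorphD !rmorphM /= !conjCK; ring.
Qed.

Definition cphase (F : pzRingType) (w : F) (c d a b : bool) : F :=
  if (c == a) && (d == b) then (if a && b then w else 1) else 0.

Lemma cphase_off (F : pzRingType) (w : F) c d a b :
  (c != a) || (d != b) -> cphase w c d a b = 0.
Proof. by rewrite /cphase; case: (c == a); case: (d == b). Qed.

Definition realizes (F : fieldType) (P T Q S : bool -> bool -> F) (s w : F) :=
  forall c d a b, P c a * T d b + S d a * Q c b = s * cphase w c d a b.

Lemma mul_eq0_of_perm2 (F : fieldType) (p0 p1 t0 t1 s0 s1 q0 q1 k : F) : k != 0 ->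
  p0 * t0 + s0 * q0 = k -> p1 * t1 + s1 * q1 = 0 ->
  p0 * t1 + s0 * q1 = 0 -> p1 * t0 + s1 * q0 = 0 -> p1 * t1 = 0.
Proof.
move=> k_neq0 e00 e11 e01 e10.
have : k * (p1 * t1) = - ((p0 * t0 + s0 * q0) - k) * (p1 * t1)
    + s0 * q0 * (p1 * t1 + s1 * q1) - (p0 * t1 + s0 * q1) * (p1 * t0 + s1 * q0)
    + (p0 * t1 + s0 * q1) * (p1 * t0) + p0 * t1 * (p1 * t0 + s1 * q0) by ring.
rewrite e00 e11 e01 e10 subrr !(mul0r, mulr0, oppr0, addr0, subr0).
by move/eqP; rewrite mulf_eq0 (negbTE k_neq0) => /eqP.
Qed.

Section Realizes.
Variable F : fieldType.
Variables s w : F.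
Hypotheses (s_neq0 : s != 0) (w_neq0 : w != 0).
Implicit Types P T Q S : bool -> bool -> F.

Lemma realizes_swap P T Q S : realizes P T Q S s w -> realizes T P S Q s w.
Proof.
move=> G c d a b; have := G d c b a.
by rewrite /cphase [(d == b) && _]andbC [b && a]andbC => <-; ring.
Qed.

Lemma realizes_diag P T Q S : realizes P T Q S s w ->
  forall a b, P a a * T b b = s * (if a && b then w else 1) - Q a b * S b a.
Proof. by move=> G a b; have := G a b a b; rewrite /cphase !eqxx /= => <-; ring. Qed.

Lemma cphase_diag_neq0 a b : cphase w a b a b != 0.
Proof. by rewrite /cphase !eqxx /=; case: (a && b); rewrite ?oner_neq0. Qed.

Lemma realizes_offdiag_mul P T Q S : realizes P T Q S s w ->
  forall a b, P a (~~ a) * T b (~~ b) = 0.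
Proof.
move=> G a b; apply: (@mul_eq0_of_perm2 _ (P a a) _ (T b b) _ (S b a) (S b (~~ a))
  (Q a b) (Q a (~~ b)) _ (mulf_neq0 s_neq0 (cphase_diag_neq0 a b))); first exact: G.
all: by rewrite G cphase_off ?mulr0 //; case: a; case: b.
Qed.

Lemma realizes_T_diag_neq0 P T Q S : realizes P T Q S s w -> forall b, T b b != 0.
Proof.
move=> G b; apply/negP => /eqP Tbb0.
have e0 := G false b false b; have e1 := G true b true b; have e01 := G false b true b.
rewrite Tbb0 !mulr0 !add0r in e0 e1 e01.
have : S b false * Q false b != 0 by rewrite e0 mulf_neq0 ?cphase_diag_neq0.
have : S b true * Q true b != 0 by rewrite e1 mulf_neq0 ?cphase_diag_neq0.
rewrite !mulf_eq0 !negb_or => /andP[S_neq0 _] /andP[_ Q_neq0].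
by move/eqP: e01; rewrite mulf_eq0 (negbTE S_neq0) (negbTE Q_neq0).
Qed.

Lemma realizes_P_offdiag P T Q S : realizes P T Q S s w -> forall a, P a (~~ a) = 0.
Proof.
move=> G a; apply/eqP/negPn/negP => Pa_neq0.
have T_off b : T b (~~ b) = 0.
  by apply/eqP; move/eqP: (realizes_offdiag_mul G a b); rewrite mulf_eq0 (negbTE Pa_neq0).
have cross_neq0 b : S b (~~ a) * Q a b != 0.
  have := G a b (~~ a) b; rewrite cphase_off ?mulr0; last by case: (a).
  move/eqP; rewrite addrC addr_eq0 => /eqP ->.
  by rewrite oppr_eq0 mulf_neq0 // (realizes_T_diag_neq0 G).
have := G a false (~~ a) true; rewrite cphase_off ?mulr0; last by case: (a).
rewrite (T_off false) mulr0 add0r => /eqP.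
move: (cross_neq0 false) (cross_neq0 true); rewrite !mulf_eq0 !negb_or.
by move=> /andP[/negbTE -> _] /andP[_ /negbTE ->].
Qed.

Lemma realizes_cross_off P T Q S : realizes P T Q S s w ->
  forall c d a b, (c != a) || (d != b) -> S d a * Q c b = 0.
Proof.
move=> G c d a b cd_ab.
have off (U : bool -> bool -> F) : (forall a, U a (~~ a) = 0) -> forall c a, c != a -> U c a = 0.
  by move=> U_off [] [] // _; rewrite -[true]/(~~ false) U_off.
have P0 := off _ (realizes_P_offdiag G); have T0 := off _ (realizes_P_offdiag (realizes_swap G)).
have := G c d a b; rewrite cphase_off // mulr0.
by case/orP: cd_ab => [/P0 | /T0] ->; rewrite ?mul0r ?mulr0 add0r.
Qed.

Lemma realizes_cross_mul P T Q S : realizes P T Q S s w ->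
  forall a b a' b', (a, b) != (a', b') -> (Q a b * S b a) * (Q a' b' * S b' a') = 0.
Proof.
move=> G a b a' b' ab_neq.
have -> : Q a b * S b a * (Q a' b' * S b' a') = S b' a' * Q a b * (S b a * Q a' b') by ring.
rewrite (realizes_cross_off G (c := a) (d := b')) ?mul0r //.
by move: ab_neq; rewrite xpair_eqE negb_and [b' == b]eq_sym.
Qed.

(* [v] is the entry of diag(1, 1, 1, w) at |a b> and [u] the share of it
   carried by the direct term.  The direct terms satisfy
   (P_11 T_11) (P_00 T_00) = (P_11 T_00) (P_00 T_11), and only the one at
   |a b> differs from s times the gate entry; this forces u = 1, w or w^-1. *)
Lemma realizes_cases P T Q S : realizes P T Q S s w -> w != 1 ->
  exists a b u v, [/\ P a a * T b b = s * u, Q a b * S b a = s * (v - u) &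
    [\/ (u, v) = (1, w), (u, v) = (w, 1) | (u, v) = (w^-1, 1)]].
Proof.
move=> G w_neq1.
pose k a b := Q a b * S b a.
have diag a b : P a a * T b b = s * (if a && b then w else 1) - k a b.
  exact: realizes_diag G a b.
have prodE : (P true true * T true true) * (P false false * T false false)
    = (P true true * T false false) * (P false false * T true true) by ring.
rewrite !diag in prodE.
case: (pickP (fun ab : bool * bool => k ab.1 ab.2 != 0)) => [[a b] /= kab_neq0|k0];
    last first.
  move: prodE; rewrite !(eqP (negbFE (k0 (_, _)))) /= !subr0 !mulr1 => prodE.
  case/eqP: w_neq1; apply: (mulfI (mulf_neq0 s_neq0 s_neq0)).
  by rewrite mulr1 -[RHS]prodE; ring.
have k0 a' b' : (a', b') != (a, b) -> k a' b' = 0.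
  move=> neq; move: (realizes_cross_mul G neq) => /eqP.
  by rewrite -/(k a' b') -/(k a b) mulf_eq0 (negbTE kab_neq0) orbF => /eqP.
move: prodE; rewrite /= !mulr1.
case: a b kab_neq0 k0 => [] [] _ k0.
- rewrite (k0 false false) // (k0 true false) // (k0 false true) // !subr0 => prodE.
  have ke : k true true = s * (w - 1).
    apply: (mulIf s_neq0); apply/eqP; rewrite -subr_eq0.
    by rewrite (_ : _ - _ = s * s - (s * w - k true true) * s); [rewrite prodE subrr | ring].
  by exists true, true, 1, w; split; [rewrite diag /= ke; ring | exact: ke | constructor 1].
- rewrite (k0 false false) // (k0 true true) // (k0 false true) // !subr0 => prodE.
  have ke : k true false = s * (1 - w).
    apply: (mulfI s_neq0); apply/eqP; rewrite -subr_eq0.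
    by rewrite (_ : _ - _ = s * w * s - (s - k true false) * s); [rewrite prodE subrr | ring].
  by exists true, false, w, 1; split; [rewrite diag /= ke; ring | exact: ke | constructor 2].
- rewrite (k0 false false) // (k0 true true) // (k0 true false) // !subr0 => prodE.
  have ke : k false true = s * (1 - w).
    apply: (mulIf s_neq0); apply/eqP; rewrite -subr_eq0.
    by rewrite (_ : _ - _ = s * w * s - s * (s - k false true)); [rewrite prodE subrr | ring].
  by exists false, true, w, 1; split; [rewrite diag /= ke; ring | exact: ke | constructor 2].
- rewrite (k0 true true) // (k0 true false) // (k0 false true) // !subr0 => prodE.
  have ke : k false false = s * (1 - w^-1).
    apply: (mulfI (mulf_neq0 s_neq0 w_neq0)); apply/eqP; rewrite -subr_eq0.
    by rewrite (_ : _ - _ = s * s - s * w * (s - k false false)); [rewrite prodE subrr | field].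
  by exists false, false, w^-1, 1; split; [rewrite diag /= ke; ring | exact: ke | constructor 3].
Qed.

End Realizes.

Lemma mul_add_mul_le1 (R : realFieldType) (A B C D : R) :
  A ^+ 2 + B ^+ 2 <= 1 -> C ^+ 2 + D ^+ 2 <= 1 -> A * D + B * C <= 1.
Proof. by move=> hAB hCD; have := sqr_ge0 (A - D); have := sqr_ge0 (B - C); nra. Qed.

Lemma contraction_gate_bound (R : realFieldType) (A B C D x y z : R) :
  0 <= y -> 0 <= z -> A ^+ 2 + B ^+ 2 <= 1 -> C ^+ 2 + D ^+ 2 <= 1 ->
  A ^+ 2 + B ^+ 2 + C ^+ 2 + D ^+ 2 <= 1 + z ^+ 2 * (1 + 2 * x ^+ 2) ->
  A * D = z -> B * C = z * x -> y ^+ 2 = 2 * x - x ^+ 2 ->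
  z * (1 + x + y) <= 1.
Proof.
move=> y0 z0 hAB hCD hdet hAD hBC hy.
have hz : z * (1 + x) <= 1 by rewrite mulrDr mulr1 -hBC -hAD; exact: mul_add_mul_le1.
(* AM-GM on A^2 + D^2 and B^2 + C^2 *)
have hF : 2 * z * (1 + x) <= A ^+ 2 + B ^+ 2 + C ^+ 2 + D ^+ 2.
  by have := sqr_ge0 (A - D); have := sqr_ge0 (B - C); nra.
have : (z * y) ^+ 2 <= (1 - z * (1 + x)) ^+ 2 by rewrite exprMn hy; nra.
rewrite ler_pXn2r ?nnegrE ?mulr_ge0 ?subr_ge0 //.
lra.
Qed.

Lemma norm_complexE (R : realType) (z : R[i]) : `|z| = ((Normc.normc z)%:C)%C.
Proof. by []. Qed.

Lemma permanent2_norm_le1 (R : realType) (a b c d : R[i]) :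
  `|a| ^+ 2 + `|b| ^+ 2 <= 1 -> `|c| ^+ 2 + `|d| ^+ 2 <= 1 -> `|a * d + b * c| <= 1.
Proof.
move=> hab hcd; apply: le_trans (ler_normD _ _) _; rewrite !normrM.
move: hab hcd; rewrite !norm_complexE -!rmorphXn -!rmorphM -!rmorphD.
rewrite -(rmorph1 (real_complex R)) !lecR.
exact: mul_add_mul_le1.
Qed.

Lemma submx2_gate_bound (R : realType) (a b c d s u v : R[i]) (x y z : R) :
  `|a| ^+ 2 + `|b| ^+ 2 <= 1 -> `|c| ^+ 2 + `|d| ^+ 2 <= 1 ->
  `|a| ^+ 2 + `|b| ^+ 2 + `|c| ^+ 2 + `|d| ^+ 2 <= 1 + `|a * d - b * c| ^+ 2 ->
  a * d = s * u -> b * c = s * (v - u) -> `|u| = 1 -> `|v| = 1 ->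
  `|v - u| = (x%:C)%C -> `|s| = (z%:C)%C -> 0 <= y -> y ^+ 2 = 2 * x - x ^+ 2 ->
  z * (1 + x + y) <= 1.
Proof.
move=> hab hcd hdet ead ebc hu hv hvu hs y0 hy.
have parallelogram : `|u - (v - u)| ^+ 2 = 2 * `|u| ^+ 2 + 2 * `|v - u| ^+ 2 - `|v| ^+ 2.
  by rewrite !normCK !rmorphB /=; ring.
have det2 : `|a * d - b * c| ^+ 2 = ((z ^+ 2 * (1 + 2 * x ^+ 2))%:C)%C.
  rewrite ead ebc -mulrBr normrM exprMn parallelogram hu hv hvu hs.
  by rewrite !(rmorphM, rmorphD, rmorphB, rmorphXn, rmorph1, rmorphMn); ring.
have z0 : 0 <= z by rewrite -(@ler0c R) -hs.
move: hab hcd hdet; rewrite det2 !norm_complexE -!rmorphXn.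
rewrite -(rmorph1 (real_complex R)) -!rmorphD !lecR => hab hcd hdet.
apply: (contraction_gate_bound y0 z0 hab hcd hdet _ _ hy); apply: complexI.
  rewrite rmorphM; change (`|a| * `|d| = (z%:C)%C).
  by rewrite -normrM ead normrM hu mulr1 hs.
rewrite !rmorphM; change (`|b| * `|c| = (z%:C)%C * (x%:C)%C).
by rewrite -normrM ebc normrM hvu hs.
Qed.

Lemma cphase_pair_norms (C : numFieldType) (w u v : C) : `|w| = 1 ->
  [\/ (u, v) = (1, w), (u, v) = (w, 1) | (u, v) = (w^-1, 1)] ->
  [/\ `|u| = 1, `|v| = 1 & `|v - u| = `|w - 1|].
Proof.
move=> w1 uv; have w_neq0 : w != 0 by rewrite -normr_eq0 w1 oner_neq0.
case: uv => -[-> ->].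
- by rewrite normr1 w1.
- by rewrite normr1 w1 distrC.
have -> : 1 - w^-1 = (w - 1) / w by field.
by rewrite normrM !normfV w1 invr1 mulr1 normr1.
Qed.

Lemma mode1_neq_mode2 n (c d : bool) : mode1 n c != mode2 n d.
Proof.
by apply/eqP => /(congr1 val); rewrite /= !inordK //; case: c; case: d.
Qed.

Lemma postselE (R : realType) n (V : 'M[R[i]]_(n.+4)) c1 c2 b1 b2 :
  postsel V c1 c2 b1 b2 =
    V (mode1 n c1) (mode1 n b1) * V (mode2 n c2) (mode2 n b2)
    + V (mode2 n c2) (mode1 n b1) * V (mode1 n c1) (mode2 n b2).
Proof. exact/amp2E/mode1_neq_mode2. Qed.

Theorem postsel_cphase_bound (R : realType) n (V : 'M[R[i]]_(n.+4)) (s w : R[i])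
    (x y z : R) :
  unitary_mx V -> `|w| = 1 -> `|w - 1| = (x%:C)%C -> 0 <= y -> y ^+ 2 = 2 * x - x ^+ 2 ->
  `|s| = (z%:C)%C -> 0 < z ->
  (forall c1 c2 b1 b2, postsel V c1 c2 b1 b2 = s * cphase w c1 c2 b1 b2) ->
  z * (1 + x + y) <= 1.
Proof.
move=> unitV w1 wx y0 hy sz z_gt0 hV.
pose P c a := V (mode1 n c) (mode1 n a); pose T d b := V (mode2 n d) (mode2 n b).
pose Q c b := V (mode1 n c) (mode2 n b); pose S d a := V (mode2 n d) (mode1 n a).
have G : realizes P T Q S s w by move=> c d a b; rewrite -hV postselE.
have s_neq0 : s != 0 by rewrite -normr_gt0 sz ltcR.
have w_neq0 : w != 0 by rewrite -normr_eq0 w1 oner_neq0.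
have contraction a b := unitary_submx2_contraction unitV
  (mode1_neq_mode2 n a b) (mode1_neq_mode2 n a b).
have [w_eq1|w_neq1] := eqVneq w 1.
  have x0 : x = 0 by apply: complexI; rewrite -wx w_eq1 subrr normr0.
  have -> : y = 0 by apply/eqP; rewrite -(sqrf_eq0 y) hy x0 mulr0 expr0n subrr.
  rewrite x0 !addr0 mulr1 -lecR -sz.
  have [hab hcd _] := contraction false false.
  have := G false false false false; rewrite /cphase /= mulr1 => <-.
  by rewrite [S _ _ * _]mulrC; exact: permanent2_norm_le1.
have [a [b [u [v [ead ebc uv]]]]] := realizes_cases s_neq0 w_neq0 G w_neq1.
have [hu hv hvu] := cphase_pair_norms w1 uv.
have [hab hcd hdet] := contraction a b.
by apply: (submx2_gate_bound hab hcd hdet ead ebc hu hv _ sz y0 hy); rewrite hvu.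
Qed.

(* Modes 0 and 2 (logical 0 of each qubit) are attenuated by the auxiliary
   modes 4 and 5; modes 1 and 3 (logical 1) interfere with each other and
   with the auxiliary mode 6. *)
Definition cphase_network_entry (R : realType) (mu sg ka q : R[i]) (i j : nat) : R[i] :=
  match i, j with
  | 0, 0 => mu | 0, 4 => sg | 4, 0 => sg | 4, 4 => - mu
  | 2, 2 => mu | 2, 5 => sg | 5, 2 => sg | 5, 5 => - mu
  | 1, 1 => mu | 1, 3 => q | 3, 1 => q | 3, 3 => mu
  | 1, 6 => ka | 3, 6 => - ka | 6, 1 => ka | 6, 3 => - ka
  | 6, 6 => q^* - mu
  | _, _ => 0
  end.

Definition cphase_network_mx (R : realType) (mu sg ka q : R[i]) : 'M[R[i]]_7 :=
  \matrix_(i < 7, j < 7) cphase_network_entry mu sg ka q i j.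

Lemma cphase_network_mx_unitary (R : realType) (mu sg ka q : R[i]) :
  mu^* = mu -> sg^* = sg -> ka^* = ka ->
  mu * mu + sg * sg = 1 -> mu * mu + q * q^* + ka * ka = 1 -> mu * (q + q^*) = ka * ka ->
  unitary_mx (cphase_network_mx mu sg ka q).
Proof.
move=> mu_real sg_real ka_real norm04 norm136 orth136.
apply/matrixP => i j; rewrite !mxE !big_ord_recl big_ord0 /= /bump /=.
case: i => [[|[|[|[|[|[|[|i]]]]]]] Hi] //; case: j => [[|[|[|[|[|[|[|j]]]]]]] Hj] //=;
  rewrite !mxE /= ?rmorph0 ?rmorphN ?rmorphB /= ?mu_real ?sg_real ?ka_real ?conjCK
    ?(mulr0, mul0r, addr0, add0r) //.
all: first [ ring | (rewrite -norm04; ring) | (rewrite -norm136; ring)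
  | (transitivity (mu * (q + q^*) - ka * ka); [ring | by rewrite orth136 subrr])
  | (transitivity ((mu * mu + q * q^* + ka * ka) - (mu * (q + q^*) - ka * ka));
       [ring | by rewrite norm136 orth136 subrr subr0]) ].
Qed.

Lemma postsel_cphase_network_mx (R : realType) (mu sg ka q t w : R[i]) :
  mu * mu = t -> q * q = t * (w - 1) ->
  forall c1 c2 b1 b2, postsel (n := 3) (cphase_network_mx mu sg ka q) c1 c2 b1 b2
    = t * cphase w c1 c2 b1 b2.
Proof.
move=> mu2 q2 c1 c2 b1 b2; rewrite postselE !mxE /mode1 /mode2 !inordK;
  try by case: c1; try by case: c2; try by case: b1; try by case: b2.
case: c1; case: c2; case: b1; case: b2; rewrite /cphase /= ?(mulr0, mul0r, addr0, add0r, mulr1) //.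
all: by rewrite ?mu2 ?q2; ring.
Qed.

Definition cphase_network (R : realType) (r : R[i]) : 'M[R[i]]_7 :=
  let L := `|1 + r| ^+ 2 in
  cphase_network_mx (sqrtC L^-1) (sqrtC (1 - L^-1)) (sqrtC ((r + r^*) / L))
    (r * sqrtC L^-1).

Theorem cphase_network_spec (R : realType) (r : R[i]) : 0 <= r + r^* ->
  unitary_mx (cphase_network r) /\
  forall c1 c2 b1 b2, postsel (n := 3) (cphase_network r) c1 c2 b1 b2
    = `|1 + r| ^- 2 * cphase (1 + r ^+ 2) c1 c2 b1 b2.
Proof.
move=> Re_ge0; rewrite /cphase_network; set L := `|1 + r| ^+ 2.
have LE : L = 1 + r * r^* + (r + r^*) by rewrite /L normCK rmorphD rmorph1; ring.
have L_ge1 : 1 <= L by rewrite LE -addrA lerDl addr_ge0 // mul_conjC_ge0.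
have L_neq0 : L != 0 by rewrite gt_eqF // (lt_le_trans ltr01 L_ge1).
have sqrtC_real x : 0 <= x -> (sqrtC x)^* = sqrtC x.
  by move=> x_ge0; apply: geC0_conj; rewrite sqrtC_ge0.
have sqrtC_sqr x : sqrtC x * sqrtC x = x by rewrite -expr2 sqrtCK.
have Linv_ge0 : 0 <= L^-1 by rewrite invr_ge0 (le_trans ler01 L_ge1).
set mu := sqrtC L^-1.
have mu_real : mu^* = mu by exact: sqrtC_real.
have mu2 : mu * mu = L^-1 by exact: sqrtC_sqr.
split.
  apply: cphase_network_mx_unitary; rewrite ?sqrtC_real ?sqrtC_sqr ?mu2 //.
  - by rewrite subr_ge0 invf_le1 // (lt_le_trans ltr01 L_ge1).
  - by rewrite divr_ge0 // (le_trans ler01 L_ge1).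
  - by rewrite addrC subrK.
  - rewrite rmorphM /= mu_real (_ : _ + _ = L^-1 * (1 + r * r^* + (r + r^*))).
      by rewrite -LE mulVf.
    by rewrite -mu2; ring.
  - by rewrite rmorphM /= mu_real -mu2; ring.
apply: postsel_cphase_network_mx => //.
by rewrite -mu2; ring.
Qed.

Lemma sqrtC_Re_ge0 (C : numClosedFieldType) (z : C) : exists r, r ^+ 2 = z /\ 0 <= r + r^*.
Proof.
have : sqrtC z + (sqrtC z)^* \is Num.real by rewrite CrealE rmorphD /= conjCK addrC.
rewrite realE => /orP[Re_ge0 | Re_le0]; first by exists (sqrtC z); rewrite sqrtCK.
by exists (- sqrtC z); rewrite sqrrN sqrtCK rmorphN -opprD oppr_ge0.
Qed.

Lemma sqrt_unit_sub1 (C : numClosedFieldType) (w r : C) : `|w| = 1 -> r ^+ 2 = w - 1 ->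
  `|1 + r| ^+ 2 = 1 + `|w - 1| + (r + r^*) /\
  (r + r^*) ^+ 2 = 2 * `|w - 1| - `|w - 1| ^+ 2.
Proof.
move=> w1 r2.
have rr : r * r^* = `|w - 1| by rewrite -normCK -normrX r2.
have ww : w * w^* = 1 by rewrite -normCK w1 expr1n.
split; first by rewrite normCK rmorphD rmorph1 -rr; ring.
have -> : (r + r^*) ^+ 2 = r ^+ 2 + (r ^+ 2)^* + 2 * (r * r^*).
  by rewrite rmorphXn /=; ring.
have conjD : (w - 1) + (w^* - 1) = - ((w - 1) * (w^* - 1)).
  have -> : (w - 1) * (w^* - 1) = w * w^* - w - w^* + 1 by ring.
  by rewrite ww; ring.
by rewrite r2 rr normCK rmorphB rmorph1 conjD; ring.
Qed.

Lemma norm_cos_sin (R : realType) (phi : R) : `|(cos phi +i* sin phi)%C| = 1.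
Proof. by rewrite norm_complexE /= cos2Dsin2 sqrtr1. Qed.

Lemma ps_opt_data (R : realType) (phi : R) : 0 <= phi <= pi ->
  exists x y : R, [/\ `|(cos phi +i* sin phi)%C - 1| = (x%:C)%C, 0 <= y,
    y ^+ 2 = 2 * x - x ^+ 2 & ps_opt phi = (1 + x + y) ^-2].
Proof.
move=> /andP[phi_ge0 phi_le_pi]; have pi_ge0 := @pi_ge0 R.
have halfE : phi = (phi / 2) *+ 2 by rewrite -mulr_natr mulfVK // pnatr_eq0.
have X_ge0 : 0 <= sin (phi / 2) by apply: sin_ge0_pi; apply/andP; split; lra.
have cos_half_ge0 : 0 <= cos (phi / 2).
  by apply: cos_ge0_pihalf; apply/andP; split; lra.
have cosE : cos phi = 1 - 2 * sin (phi / 2) ^+ 2 by rewrite {1}halfE cos_mulr2n cos2sin2; ring.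
have sinE : sin phi = 2 * sin (phi / 2) * cos (phi / 2) by rewrite {1}halfE sin_mulr2n; ring.
have quarter_ge0 : 0 <= sin ((pi - phi) / 4) by apply: sin_ge0_pi; apply/andP; split; lra.
have quarterE : 2 * sin ((pi - phi) / 4) ^+ 2 = 1 - sin (phi / 2).
  have halfD : (pi - phi) / 2 = - (phi / 2 - pi / 2) by field.
  have quarterD : (pi - phi) / 2 = ((pi - phi) / 4) *+ 2 by rewrite -mulr_natr; field.
  have := cosBpihalf (phi / 2); rewrite -cosN -halfD quarterD cos_mulr2n cos2sin2 => <-.
  ring.
set y := Num.sqrt 2 ^+ 3 * sin ((pi - phi) / 4) * Num.sqrt (sin (phi / 2)).
exists (2 * sin (phi / 2)), y; split.
- have normE : (cos phi - 1) ^+ 2 + sin phi ^+ 2 = (2 * sin (phi / 2)) ^+ 2.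
    by rewrite cosE sinE exprMn (cos2sin2 (phi / 2)); ring.
  rewrite norm_complexE; congr (_%:C)%C; rewrite /= oppr0 addr0 normE.
  by rewrite sqrtr_sqr ger0_norm ?mulr_ge0.
- by rewrite /y !mulr_ge0 ?exprn_ge0 ?sqrtr_ge0.
- have -> : y ^+ 2 = 4 * sin (phi / 2) * (2 * sin ((pi - phi) / 4) ^+ 2).
    by rewrite /y !exprMn !sqr_sqrtr //; ring.
  by rewrite quarterE; ring.
- by rewrite /ps_opt ger0_norm.
Qed.

Lemma ler_sqr_invr (R : realFieldType) (z L : R) :
  0 <= z -> 0 < L -> z * L <= 1 -> z ^+ 2 <= L ^-2.
Proof.
move=> z_ge0 L_gt0 zL_le1; rewrite -exprVn ler_pXn2r ?nnegrE ?invr_ge0 ?(ltW L_gt0) //.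
by rewrite -[L^-1]div1r ler_pdivlMr.
Qed.

Theorem exists_postsel_cphase (R : realType) (w : R[i]) (x y : R) :
  `|w| = 1 -> `|w - 1| = (x%:C)%C -> 0 <= y -> y ^+ 2 = 2 * x - x ^+ 2 ->
  exists V : 'M[R[i]]_7, unitary_mx V /\ forall c1 c2 b1 b2,
    postsel (n := 3) V c1 c2 b1 b2 = ((1 + x + y)^-1)%:C%C * cphase w c1 c2 b1 b2.
Proof.
move=> w1 wx y_ge0 hy.
have [r [r2 Re_ge0]] := sqrtC_Re_ge0 (w - 1).
have [normE ReE] := sqrt_unit_sub1 w1 r2.
have Re_y : r + r^* = (y%:C)%C.
  apply/eqP; rewrite -(@eqrXn2 _ 2) ?ler0c // ReE wx -(rmorphXn _ 2 y) hy.
  by rewrite !(rmorphB, rmorphM, rmorphXn, rmorph_nat).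
have [unitV hV] := cphase_network_spec Re_ge0.
exists (cphase_network r); split => // c1 c2 b1 b2.
by rewrite hV r2 subrKC normE wx Re_y -(rmorph1 (real_complex R)) -!rmorphD -fmorphV.
Qed.

Theorem mainTheorem1 (R : realType) (phi : R) (hphi : 0 <= phi <= pi) :
  (forall (n : nat) (V : 'M[R[i]]_(n.+4)) (p : R),
      unitary_mx V -> implements phi V p -> p <= ps_opt phi) /\
  (exists (n : nat) (V : 'M[R[i]]_(n.+4)),
      unitary_mx V /\ implements phi V (ps_opt phi)).
Proof.
have [x [y [wx y_ge0 hy ps_optE]]] := ps_opt_data hphi.
have w1 := norm_cos_sin phi.
have x_ge0 : 0 <= x by rewrite -(@ler0c R) -wx.
have L_gt0 : 0 < 1 + x + y by lra.
split.
  move=> n V p unitV [p_gt0 [c [c1 hV]]].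
  have sz : `|(Num.sqrt p)%:C%C * c| = ((Num.sqrt p)%:C)%C.
    by rewrite normrM c1 mulr1 ger0_norm // ler0c sqrtr_ge0.
  rewrite -[p]sqr_sqrtr ?(ltW p_gt0) // ps_optE.
  apply: ler_sqr_invr => //; first exact: sqrtr_ge0.
  by apply: (postsel_cphase_bound unitV w1 wx y_ge0 hy sz) => //; rewrite (sqrtr_gt0 p).
have [V [unitV hV]] := exists_postsel_cphase w1 wx y_ge0 hy.
exists 3, V; split => //; split; first by rewrite ps_optE invr_gt0 exprn_gt0.
have sqrt_ps : Num.sqrt (ps_opt phi) = (1 + x + y)^-1.
  by rewrite ps_optE -exprVn (sqrtr_sqr (1 + x + y)^-1) ger0_norm // invr_ge0 ltW.
by exists 1; split => [|c1 c2 b1 b2]; rewrite ?normr1 // hV sqrt_ps mulr1.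
Qed.
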